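(* Let $(S,\alpha)$ be a twisted K3 surface with $d=\mathrm{ord}(\alpha)$, and let $B\in\frac1d H^2(S,\mathbb Z)$ be a B-field lift of $\alpha$. Let $\kappa:\widetilde{NS}(S)\to H^0(S,\mathbb Q)\oplus NS(S)\oplus H^4(S,\mathbb Q)$ be $\kappa(a,l,b)=(da,l,\tfrac1d b)$. Then $e^B\circ\kappa$ is an orientation-preserving isometry $$e^B\circ\kappa:\widetilde{NS}(S)\xrightarrow{\sim}\big\langle \widetilde{NS}(S,B),\,(0,0,-\tfrac1d)\big\rangle .$$
   Context: $S$ is a complex projective K3 surface with $NS(S)$, holomorphic 2-form class $\omega_S$. Mukai lattice $\widetilde H(S,\mathbb Z)=H^0\oplus H^2\oplus H^4$ with elements $(a,l,b)$ and pairing $((a,l,b),(a',l',b'))=(l,l')-ab'-a'b$, extended $\mathbb Q$-bilinearly; $\widetilde{NS}(S)=H^0\oplus NS(S)\oplus H^4$. For $B\in H^2(S,\mathbb Q)$, $e^B(a,l,b)=(a,l+aB,b+(B,l)+\frac a2(B,B))$. A B-field lift of $\alpha\in\mathrm{Br}(S)\cong H^2(S,\mathbb Q)/(NS(S)_{\mathbb Q}+H^2(S,\mathbb Z))$ is a preimage $B$. $\widetilde{NS}(S,B)=e^B(\omega_S)^\perp\cap\widetilde H(S,\mathbb Z)$ where $e^B(\omega_S)=(0,\omega_S,(B,\omega_S))$; $\langle \widetilde{NS}(S,B),(0,0,-\frac1d)\rangle$ denotes the lattice generated by these in $\widetilde H(S,\mathbb Q)$. Orientations: for any $B'$ (including $B'=0$),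 the signature-$(2,\rho(S))$ lattice $\widetilde{NS}(S,B')$ and any lattice in $\widetilde{NS}(S,B')_{\mathbb Q}$ is oriented by declaring the positive 2-plane with ordered basis $e^{B'}(1,0,-1),e^{B'}(0,h,0)$, $h$ ample, positively oriented. *)

From HB Require Import structures.
From mathcomp Require Import all_boot all_order all_algebra.
Set Implicit Arguments. Unset Strict Implicit. Unset Printing Implicit Defensive.
Import Order.TTheory GRing.Theory Num.Theory.
Local Open Scope ring_scope.

(* ---------- The K3 lattice H^2(S,Z) = U^3 (+) E8(-1)^2 (fixed marking) ---------- *)
Definition k3rank : nat := 22.

(* E8 Dynkin diagram: chain 0-1-2-3-4-5-6, node 7 attached to node 4 *)
Definition e8_edge (i j : nat) : bool :=
  [|| (i.+1 == j) && (j <= 6)%N, (j.+1 == i) && (i <= 6)%N,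
      (i == 4%N) && (j == 7%N) | (i == 7%N) && (j == 4%N)].

(* entries of E8(-1) = minus the Cartan matrix *)
Definition e8m_entry (i j : nat) : rat :=
  if i == j then -2 else if e8_edge i j then 1 else 0.

Definition k3_entry (i j : nat) : rat :=
  if (i < 6)%N && (j < 6)%N then
    (if (i./2 == j./2) && (i != j) then 1 else 0)
  else if [&& (6 <= i)%N, (i < 14)%N, (6 <= j)%N & (j < 14)%N] then
    e8m_entry (i - 6) (j - 6)
  else if [&& (14 <= i)%N, (i < 22)%N, (14 <= j)%N & (j < 22)%N] then
    e8m_entry (i - 14) (j - 14)
  else 0.

Definition K3 : 'M[rat]_k3rank := \matrix_(i, j) k3_entry i j.

(* the intersection pairing on H^2(S,Q) = Q^22 *)
Definition dot2 (x y : 'rV[rat]_k3rank) : rat :=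
  \sum_(i < k3rank) \sum_(j < k3rank) x 0 i * K3 i j * y 0 j.

(* its C-bilinear extension, x rational, w complex; C is a numClosedFieldType
   playing the role of the complex numbers *)
Definition dot2C (C : numClosedFieldType) (x : 'rV[rat]_k3rank) (w : 'rV[C]_k3rank) : C :=
  \sum_(i < k3rank) \sum_(j < k3rank) ratr (x 0 i * K3 i j) * w 0 j.

Definition dotCC (C : numClosedFieldType) (v w : 'rV[C]_k3rank) : C :=
  \sum_(i < k3rank) \sum_(j < k3rank) v 0 i * ratr (K3 i j) * w 0 j.

(* integral classes: elements of H^2(S,Z) *)
Definition intvec (x : 'rV[rat]_k3rank) : Prop := forall i, x 0 i \is a Num.int.

(* omega is the class of a holomorphic 2-form: (w,w)=0, (w,wbar)>0 *)
Definition is_period (C : numClosedFieldType) (w : 'rV[C]_k3rank) : Prop :=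
  dotCC w w = 0 /\ 0 < dotCC w (map_mx (fun z => z^*) w).

(* NS(S) = H^{1,1} cap H^2(S,Z) = omega^perp cap H^2(S,Z)  (Lefschetz (1,1)) *)
Definition in_NS (C : numClosedFieldType) (w : 'rV[C]_k3rank) (l : 'rV[rat]_k3rank) : Prop :=
  intvec l /\ dot2C l w = 0.

(* NS(S)_Q inside H^2(S,Q) *)
Definition in_NSQ (C : numClosedFieldType) (w : 'rV[C]_k3rank) (l : 'rV[rat]_k3rank) : Prop :=
  exists m : nat, (0 < m)%N /\ in_NS w (m%:R *: l).

(* ample class (lattice-theoretic: h in NS, h^2>0, h not orthogonal to any (-2)-class) *)
Definition is_ample (C : numClosedFieldType) (w : 'rV[C]_k3rank) (h : 'rV[rat]_k3rank) : Prop :=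
  [/\ in_NS w h, 0 < dot2 h h &
      forall delta, in_NS w delta -> dot2 delta delta = -2 -> dot2 h delta != 0].

(* x is zero in Br(S) = H^2(S,Q)/(NS(S)_Q + H^2(S,Z)) *)
Definition brauer_trivial (C : numClosedFieldType) (w : 'rV[C]_k3rank) (x : 'rV[rat]_k3rank) : Prop :=
  exists l m, in_NSQ w l /\ intvec m /\ x = l + m.

(* d = ord(alpha), alpha = [B] in Br(S) *)
Definition brauer_order (C : numClosedFieldType) (w : 'rV[C]_k3rank) (B : 'rV[rat]_k3rank) (d : nat) : Prop :=
  [/\ (0 < d)%N, brauer_trivial w (d%:R *: B) &
      forall k : nat, (0 < k)%N -> (k < d)%N -> ~ brauer_trivial w (k%:R *: B)].

Record mukai := Mk { mk0 : rat; mk2 : 'rV[rat]_k3rank; mk4 : rat }.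

Definition madd (v w : mukai) : mukai := Mk (mk0 v + mk0 w) (mk2 v + mk2 w) (mk4 v + mk4 w).
Definition mopp (v : mukai) : mukai := Mk (- mk0 v) (- mk2 v) (- mk4 v).
Definition mzero : mukai := Mk 0 0 0.

Definition mpair (v w : mukai) : rat :=
  dot2 (mk2 v) (mk2 w) - mk0 v * mk4 w - mk0 w * mk4 v.

Definition eB (B : 'rV[rat]_k3rank) (v : mukai) : mukai :=
  Mk (mk0 v) (mk2 v + mk0 v *: B) (mk4 v + dot2 B (mk2 v) + mk0 v / 2%:R * dot2 B B).

Definition kappa (d : nat) (v : mukai) : mukai :=
  Mk (d%:R * mk0 v) (mk2 v) (mk4 v / d%:R).

Definition mint (v : mukai) : Prop :=
  [/\ mk0 v \is a Num.int, intvec (mk2 v) & mk4 v \is a Num.int].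

(* NS~(S) = H^0 (+) NS(S) (+) H^4 *)
Definition tNS (C : numClosedFieldType) (w : 'rV[C]_k3rank) (v : mukai) : Prop :=
  [/\ mk0 v \is a Num.int, in_NS w (mk2 v) & mk4 v \is a Num.int].

(* pairing of a rational Mukai vector with e^B(omega) = (0, omega, (B,omega)) *)
Definition mpair_eBomega (C : numClosedFieldType) (w : 'rV[C]_k3rank) (B : 'rV[rat]_k3rank)
  (v : mukai) : C :=
  dot2C (mk2 v) w - ratr (mk0 v) * dot2C B w.

(* NS~(S,B) = e^B(omega)^perp cap H~(S,Z) *)
Definition tNSB (C : numClosedFieldType) (w : 'rV[C]_k3rank) (B : 'rV[rat]_k3rank) (v : mukai) : Prop :=
  mint v /\ mpair_eBomega w B v = 0.

Inductive zspan (P : mukai -> Prop) : mukai -> Prop :=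
| zspan0 : zspan P mzero
| zspan_gen v : P v -> zspan P v
| zspan_add v w : zspan P v -> zspan P w -> zspan P (madd v w)
| zspan_opp v : zspan P v -> zspan P (mopp v).

Definition tNSB_ext (C : numClosedFieldType) (w : 'rV[C]_k3rank) (B : 'rV[rat]_k3rank) (d : nat) :
  mukai -> Prop :=
  zspan (fun v => tNSB w B v \/ v = Mk 0 0 (- (d%:R)^-1)).

Definition lattice_isometry (L1 L2 : mukai -> Prop) (f : mukai -> mukai) : Prop :=
  [/\ forall x, L1 x -> L2 (f x),
      forall x y, L1 x -> L1 y -> f (madd x y) = madd (f x) (f y),
      forall x y, L1 x -> L1 y -> f x = f y -> x = y,
      forall y, L2 y -> exists2 x, L1 x & f x = y &
      forall x y, L1 x -> L1 y -> mpair (f x) (f y) = mpair x y].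

(* Two ordered bases (p1,p2), (q1,q2) of positive definite 2-planes in a space of
   signature (2,n) define the same orientation of positive 2-planes iff the
   orthogonal projection of (p1,p2) onto span(q1,q2) is positively oriented
   w.r.t. (q1,q2), i.e. iff det [(p_i,q_j)] > 0. *)
Definition same_orientation (p1 p2 q1 q2 : mukai) : Prop :=
  0 < mpair p1 q1 * mpair p2 q2 - mpair p1 q2 * mpair p2 q1.

(* f : NS~(S) -> (lattice in NS~(S,B)_Q) is orientation preserving: source oriented by
   (1,0,-1),(0,h,0) (B'=0); target oriented by e^B(1,0,-1), e^B(0,h,0). *)
Definition orientation_preserving (h B : 'rV[rat]_k3rank) (f : mukai -> mukai) : Prop :=
  same_orientation (f (Mk 1 0 (-1))) (f (Mk 0 h 0)) (eB B (Mk 1 0 (-1))) (eB B (Mk 0 h 0)).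

From HB Require Import structures.
From mathcomp Require Import all_boot all_order all_algebra.
From mathcomp Require Import ring.
Set Implicit Arguments. Unset Strict Implicit. Unset Printing Implicit Defensive.
Import Order.TTheory GRing.Theory Num.Theory.
Local Open Scope ring_scope.

(* Both e^B and kappa are additive, invertible (by e^{-B} and kappaV) and preserve
   the Mukai pairing, so f is an injective additive isometry.  What remains is to
   identify its image, for which we use that the K3 lattice is integral and even:
   - e^B kappa (a,l,b) = (da, l + a(dB), 0) + k (0,0,-1/d) with the first summand
     in NS~(S,B) and k an integer, so f maps NS~(S) into the target lattice;
   - if (a,m,c) lies in NS~(S,B), then aB = m modulo NS(S)_Q, i.e. a.alpha = 0
     in Br(S); as d = ord(alpha), d divides a and kappaV e^{-B} (a,m,c) is integral;
   - (0,0,-1/d) = f(0,0,-1), so f hits all generators, hence the whole span.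
   Finally e^B preserves the pairing, so the orientation condition reduces to the
   positivity of the determinant (d + 1/d)(h,h). *)

Lemma e8_edge_sym i j : e8_edge i j = e8_edge j i.
Proof.
rewrite /e8_edge.
by case: (i.+1 == j); case: (j.+1 == i); case: (i <= 6)%N; case: (j <= 6)%N;
   case: (i == 4)%N; case: (j == 4)%N; case: (i == 7)%N; case: (j == 7)%N.
Qed.

Lemma e8m_sym i j : e8m_entry i j = e8m_entry j i.
Proof. by rewrite /e8m_entry eq_sym e8_edge_sym. Qed.

Lemma and4_swap (a b c e : bool) : [&& a, b, c & e] = [&& c, e, a & b].
Proof. by case: a; case: b; case: c; case: e. Qed.

Lemma k3_entry_sym i j : k3_entry i j = k3_entry j i.
Proof.
rewrite /k3_entry (andbC (j < 6)%N) (eq_sym j./2) (eq_sym j i).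
by rewrite (e8m_sym (j - 6)) (e8m_sym (j - 14)) (and4_swap (6 <= j)%N) (and4_swap (14 <= j)%N).
Qed.

Lemma K3_sym i j : K3 i j = K3 j i.
Proof. by rewrite !mxE k3_entry_sym. Qed.

Lemma K3_int i j : K3 i j \is a Num.int.
Proof.
rewrite mxE /k3_entry /e8m_entry.
by repeat case: ifP => _; rewrite ?rpred0 ?rpred1 ?rpredN ?natr_int.
Qed.

Lemma K3_diag_even i : K3 i i / 2 \is a Num.int.
Proof.
rewrite mxE /k3_entry /e8m_entry !eqxx /=.
have half_m2 : (-2 : rat) / 2 = -1 by rewrite mulNr divff.
by repeat case: ifP => _; rewrite ?mul0r ?rpred0 ?half_m2 ?rpredN ?rpred1.
Qed.

(* An integral "upper half" U of the Gram matrix, K3 = U + U^T; it witnesses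
   the evenness of the form. *)
Definition K3_half : 'M[rat]_k3rank :=
  \matrix_(i, j) if (i < j)%N then K3 i j else if i == j then K3 i j / 2 else 0.

Lemma K3_half_split i j : K3 i j = K3_half i j + K3_half j i.
Proof.
rewrite [K3_half i j]mxE [K3_half j i]mxE.
case: (ltngtP i j) => [lt_ij|lt_ji|/val_inj eq_ij].
- by rewrite (gtn_eqF lt_ij : (j == i) = false) addr0.
- by rewrite (gtn_eqF lt_ji : (i == j) = false) add0r K3_sym.
- by rewrite eq_ij eqxx -splitr.
Qed.

Lemma K3_half_int i j : K3_half i j \is a Num.int.
Proof.
rewrite mxE; case: ifP => _; first exact: K3_int.
by case: eqP => [->|_]; [exact: K3_diag_even | exact: rpred0].
Qed.

Lemma dot2Dl x y z : dot2 (x + y) z = dot2 x z + dot2 y z.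
Proof.
rewrite /dot2 -big_split; apply: eq_bigr => i _; rewrite -big_split.
by apply: eq_bigr => j _; rewrite mxE !mulrDl.
Qed.

Lemma dot2Zl c x z : dot2 (c *: x) z = c * dot2 x z.
Proof.
rewrite /dot2 mulr_sumr; apply: eq_bigr => i _; rewrite mulr_sumr.
by apply: eq_bigr => j _; rewrite mxE !mulrA.
Qed.

Lemma dot2_sym x y : dot2 x y = dot2 y x.
Proof.
rewrite /dot2 exchange_big /=; apply: eq_bigr => i _; apply: eq_bigr => j _.
by rewrite K3_sym mulrC [x 0 j * _]mulrC mulrA.
Qed.

Lemma dot2Nl x z : dot2 (- x) z = - dot2 x z.
Proof. by rewrite -scaleN1r dot2Zl mulN1r. Qed.

Lemma dot2_0l z : dot2 0 z = 0.
Proof. by rewrite -(scale0r (0 : 'rV[rat]_k3rank)) dot2Zl mul0r. Qed.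

Lemma dot2Dr x y z : dot2 z (x + y) = dot2 z x + dot2 z y.
Proof. by rewrite !(dot2_sym z) dot2Dl. Qed.

Lemma dot2Zr c x z : dot2 z (c *: x) = c * dot2 z x.
Proof. by rewrite !(dot2_sym z) dot2Zl. Qed.

Lemma dot2Nr x z : dot2 z (- x) = - dot2 z x.
Proof. by rewrite !(dot2_sym z) dot2Nl. Qed.

Lemma dot2_0r z : dot2 z 0 = 0.
Proof. by rewrite dot2_sym dot2_0l. Qed.

Lemma dot2CDl (C : numClosedFieldType) x y (w : 'rV[C]_k3rank) :
  dot2C (x + y) w = dot2C x w + dot2C y w.
Proof.
rewrite /dot2C -big_split; apply: eq_bigr => i _; rewrite -big_split.
by apply: eq_bigr => j _; rewrite mxE mulrDl rmorphD mulrDl.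
Qed.

Lemma dot2CZl (C : numClosedFieldType) c x (w : 'rV[C]_k3rank) :
  dot2C (c *: x) w = ratr c * dot2C x w.
Proof.
rewrite /dot2C mulr_sumr; apply: eq_bigr => i _; rewrite mulr_sumr.
by apply: eq_bigr => j _; rewrite mxE -mulrA rmorphM mulrA.
Qed.

Lemma dot2CNl (C : numClosedFieldType) x (w : 'rV[C]_k3rank) :
  dot2C (- x) w = - dot2C x w.
Proof. by rewrite -scaleN1r dot2CZl rmorphN1 mulN1r. Qed.

Lemma dot2C0l (C : numClosedFieldType) (w : 'rV[C]_k3rank) : dot2C 0 w = 0.
Proof. by rewrite -(scale0r (0 : 'rV[rat]_k3rank)) dot2CZl rmorph0 mul0r. Qed.

Lemma intvec0 : intvec 0.
Proof. by move=> i; rewrite mxE rpred0. Qed.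

Lemma intvecD x y : intvec x -> intvec y -> intvec (x + y).
Proof. by move=> hx hy i; rewrite mxE rpredD. Qed.

Lemma intvecN x : intvec x -> intvec (- x).
Proof. by move=> hx i; rewrite mxE rpredN. Qed.

Lemma intvecB x y : intvec x -> intvec y -> intvec (x - y).
Proof. by move=> hx hy; apply/intvecD/intvecN. Qed.

Lemma intvecZ c x : c \is a Num.int -> intvec x -> intvec (c *: x).
Proof. by move=> hc hx i; rewrite mxE rpredM. Qed.

Lemma dot2_int x y : intvec x -> intvec y -> dot2 x y \is a Num.int.
Proof.
move=> hx hy; apply: rpred_sum => i _; apply: rpred_sum => j _.
by rewrite !rpredM // K3_int.
Qed.

Lemma dot2_even x : intvec x -> dot2 x x / 2 \is a Num.int.
Proof.
move=> hx.
set S := \sum_(i < k3rank) \sum_(j < k3rank) x 0 i * K3_half i j * x 0 j.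
have S_int : S \is a Num.int.
  by apply: rpred_sum => i _; apply: rpred_sum => j _; rewrite !rpredM // K3_half_int.
have S_transpose :
    \sum_(i < k3rank) \sum_(j < k3rank) x 0 i * K3_half j i * x 0 j = S.
  rewrite /S exchange_big /=; apply: eq_bigr => i _; apply: eq_bigr => j _.
  by rewrite mulrC [x 0 j * _]mulrC mulrA.
have -> : dot2 x x = S + S.
  rewrite -[X in S + X]S_transpose /dot2 /S -big_split; apply: eq_bigr => i _.
  by rewrite -big_split; apply: eq_bigr => j _; rewrite K3_half_split mulrDr mulrDl.
by have -> : (S + S) / 2 = S by field.
Qed.

Lemma mukai_eq (v w : mukai) :
  mk0 v = mk0 w -> mk2 v = mk2 w -> mk4 v = mk4 w -> v = w.
Proof. by case: v => ? ? ?; case: w => ? ? ? /= -> -> ->. Qed.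

Lemma eB_add B u v : eB B (madd u v) = madd (eB B u) (eB B v).
Proof.
case: u => a l b; case: v => a' l' b'; apply: mukai_eq => //=.
  by rewrite scalerDl addrACA.
by rewrite dot2Dr; ring.
Qed.

Lemma eB_opp B v : eB B (mopp v) = mopp (eB B v).
Proof.
case: v => a l b; apply: mukai_eq => //=; first by rewrite scaleNr opprD.
by rewrite dot2Nr; ring.
Qed.

Lemma eB0 B : eB B mzero = mzero.
Proof. by apply: mukai_eq; rewrite /= ?scale0r ?addr0 // dot2_0r !mul0r !addr0. Qed.

Lemma eBNK B v : eB (- B) (eB B v) = v.
Proof.
case: v => a l b; apply: mukai_eq => //=; first by rewrite scalerN addrK.
by rewrite dot2Nl dot2Nr dot2Nl opprK dot2Dr dot2Zr; field.
Qed.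

Lemma eB_inj B : injective (eB B).
Proof. exact: can_inj (eBNK B). Qed.

Lemma eB_isometry B u v : mpair (eB B u) (eB B v) = mpair u v.
Proof.
case: u => a l b; case: v => a' l' b'; rewrite /mpair /=.
rewrite dot2Dl !dot2Dr !dot2Zl !dot2Zr (dot2_sym l B).
by field.
Qed.

Lemma kappa_add d u v : kappa d (madd u v) = madd (kappa d u) (kappa d v).
Proof. by case: u => a l b; case: v => a' l' b'; apply: mukai_eq; rewrite /= ?mulrDr ?mulrDl. Qed.

Lemma kappa_opp d v : kappa d (mopp v) = mopp (kappa d v).
Proof. by case: v => a l b; apply: mukai_eq; rewrite /= ?mulrN ?mulNr. Qed.

Lemma kappa0 d : kappa d mzero = mzero.
Proof. by apply: mukai_eq; rewrite /= ?mulr0 ?mul0r. Qed.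

Lemma kappa_isometry d u v : d%:R != 0 :> rat -> mpair (kappa d u) (kappa d v) = mpair u v.
Proof. by move=> d_neq0; case: u => a l b; case: v => a' l' b'; rewrite /mpair /=; field. Qed.

Definition kappaV (d : nat) (v : mukai) : mukai :=
  Mk (mk0 v / d%:R) (mk2 v) (d%:R * mk4 v).

Lemma kappaK d : d%:R != 0 :> rat -> cancel (kappa d) (kappaV d).
Proof. by move=> d_neq0 [a l b]; apply: mukai_eq => //=; field. Qed.

Lemma kappaVK d : d%:R != 0 :> rat -> cancel (kappaV d) (kappa d).
Proof. by move=> d_neq0 [a l b]; apply: mukai_eq => //=; field. Qed.

(* Orientations of positive 2-planes only depend on the pairing, so they are
   preserved by the isometry e^B. *)
Lemma same_orientation_eB B p1 p2 q1 q2 :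
  same_orientation (eB B p1) (eB B p2) (eB B q1) (eB B q2) =
  same_orientation p1 p2 q1 q2.
Proof. by rewrite /same_orientation !eB_isometry. Qed.

(* The basis (d,0,-1/d), (0,h,0) defines the same orientation as (1,0,-1),(0,h,0):
   the matrix of pairings is diag(d + 1/d, (h,h)). *)
Lemma kappa_orientation d h :
  (0 < d)%N -> 0 < dot2 h h ->
  same_orientation (kappa d (Mk 1 0 (-1))) (kappa d (Mk 0 h 0)) (Mk 1 0 (-1)) (Mk 0 h 0).
Proof.
move=> d_gt0 hh_gt0; rewrite /same_orientation /mpair /= !dot2_0l !dot2_0r.
rewrite !(mulr0, mul0r, mulr1, mul1r, subr0, sub0r, mulrN1, mulNr, opprK).
by rewrite mulr_gt0 // addr_gt0 ?invr_gt0 ?ltr0n.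
Qed.

Lemma zspan_intmul P c k :
  zspan P (Mk 0 0 c) -> k \is a Num.int -> zspan P (Mk 0 0 (k * c)).
Proof.
move=> hc /intrP[z ->].
have zspan_nat (n : nat) : zspan P (Mk 0 0 (n%:R * c)).
  elim: n => [|n IH]; first by rewrite mul0r; exact: zspan0.
  have -> : Mk 0 0 (n.+1%:R * c) = madd (Mk 0 0 (n%:R * c)) (Mk 0 0 c).
    by apply: mukai_eq; rewrite /= ?addr0 // mulrSr mulrDl mul1r.
  exact: zspan_add.
case: z => n; first exact: zspan_nat.
have -> : Mk 0 0 ((Negz n)%:~R * c) = mopp (Mk 0 0 (n.+1%:R * c)).
  by apply: mukai_eq; rewrite /= ?oppr0 // NegzE mulrNz mulNr.
exact/zspan_opp/zspan_nat.
Qed.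

Section ZspanImage.

Variables (P L : mukai -> Prop) (f : mukai -> mukai).
Hypotheses (L0 : L mzero) (LD : forall x y, L x -> L y -> L (madd x y))
  (LN : forall x, L x -> L (mopp x)).
Hypotheses (f0 : f mzero = mzero) (fD : forall x y, f (madd x y) = madd (f x) (f y))
  (fN : forall x, f (mopp x) = mopp (f x)).
Hypothesis P_image : forall v, P v -> exists2 x, L x & f x = v.

Lemma zspan_image v : zspan P v -> exists2 x, L x & f x = v.
Proof.
elim=> [|w /P_image //|w w' _ [x Lx <-] _ [x' Lx' <-]|w _ [x Lx <-]].
- by exists mzero.
- by exists (madd x x'); [exact: LD | exact: fD].
- by exists (mopp x); [exact: LN | exact: fN].
Qed.

End ZspanImage.

Lemma tNS0 (C : numClosedFieldType) (omega : 'rV[C]_k3rank) : tNS omega mzero.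
Proof. by split; rewrite /= ?rpred0 //; split; [exact: intvec0 | exact: dot2C0l]. Qed.

Lemma tNS_add (C : numClosedFieldType) (omega : 'rV[C]_k3rank) x y :
  tNS omega x -> tNS omega y -> tNS omega (madd x y).
Proof.
case: x => a l b; case: y => a' l' b' [/= ha [hl hlw] hb] [/= ha' [hl' hlw'] hb'].
split => /=; [exact: rpredD | split | exact: rpredD].
- exact: intvecD.
- by rewrite dot2CDl hlw hlw' addr0.
Qed.

Lemma tNS_opp (C : numClosedFieldType) (omega : 'rV[C]_k3rank) x :
  tNS omega x -> tNS omega (mopp x).
Proof.
case: x => a l b [/= ha [hl hlw] hb].
split => /=; [by rewrite rpredN | split | by rewrite rpredN].
- exact: intvecN.
- by rewrite dot2CNl hlw oppr0.
Qed.

Lemma brauer_trivialD (C : numClosedFieldType) (omega : 'rV[C]_k3rank) x y :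
  brauer_trivial omega x -> intvec y -> brauer_trivial omega (x + y).
Proof.
move=> [l [m [hl [hm ->]]]] hy.
by exists l, (m + y); split; [|split; [exact: intvecD | rewrite addrA]].
Qed.

Section TwistedMukai.

Variables (C : numClosedFieldType) (omega : 'rV[C]_k3rank) (B : 'rV[rat]_k3rank) (d : nat).
Hypotheses (d_gt0 : (0 < d)%N) (dB_int : intvec (d%:R *: B)).

Let d_neq0 : d%:R != 0 :> rat.
Proof. by rewrite pnatr_eq0 -lt0n. Qed.

(* If (a,m,c) is in NS~(S,B), then aB - m lies in NS(S)_Q, so a.alpha = 0. *)
Lemma tNSB_brauer_trivial v : tNSB omega B v -> brauer_trivial omega (mk0 v *: B).
Proof.
case: v => a m c [[/= ha hm _] /=]; rewrite /mpair_eBomega /= => /subr0_eq he.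
exists (a *: B - m), m; split; last by split; [|rewrite subrK].
exists d; split => //; split.
- rewrite scalerBr scalerA mulrC -scalerA.
  by apply: intvecB; apply: intvecZ => //; exact: natr_int.
- by rewrite dot2CZl dot2CDl dot2CNl dot2CZl he subrr mulr0.
Qed.

Lemma tNSB_divisible v :
  brauer_order omega B d -> tNSB omega B v -> exists q : int, mk0 v = q%:~R * d%:R.
Proof.
move=> [_ _ minimal] hv; have [[/intrP[z hz] _ _] _] := hv.
have dZ_neq0 : d%:Z != 0 by rewrite eqz_nat -lt0n.
pose n := `|(z %% d)%Z|%N.
have n_def : (z %% d)%Z = n%:Z by rewrite gez0_abs // modz_ge0.
have n_lt_d : (n < d)%N by rewrite -ltz_nat -n_def ltz_mod.
have z_eq : z = (z %/ d)%Z * d + n by rewrite -n_def -divz_eq.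
exists (z %/ d)%Z; suff n0 : n = 0%N by rewrite hz {1}z_eq n0 addr0 rmorphM.
case: (posnP n) => // n_gt0; exfalso; apply: (minimal n n_gt0 n_lt_d).
have -> : n%:R *: B = mk0 v *: B - (z %/ d)%Z%:~R *: (d%:R *: B).
  by rewrite hz scalerA -scalerBl {1}z_eq rmorphD rmorphM /= addrAC subrr add0r.
apply: brauer_trivialD; first exact: tNSB_brauer_trivial.
by apply/intvecN/intvecZ => //; exact: intr_int.
Qed.

Lemma tNSB_ext_shift a l c :
  tNSB omega B (Mk a l 0) -> d%:R * c \is a Num.int -> tNSB_ext omega B d (Mk a l c).
Proof.
move=> hv dc_int.
have -> : Mk a l c = madd (Mk a l 0) (Mk 0 0 (- (d%:R * c) * - d%:R^-1)).
  by apply: mukai_eq; rewrite /= ?addr0 // add0r; field.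
apply: zspan_add; first exact/zspan_gen/or_introl.
by apply: zspan_intmul; [exact/zspan_gen/or_intror | rewrite rpredN].
Qed.

Lemma twist_tNS x : tNS omega x -> tNSB_ext omega B d (eB B (kappa d x)).
Proof.
case: x => a l b [/= ha [hl hlw] hb]; rewrite /eB /kappa /=.
apply: tNSB_ext_shift.
  split; first split => /=.
  - by rewrite rpredM ?natr_int.
  - by rewrite mulrC -scalerA; apply: intvecD => //; exact: intvecZ.
  - exact: rpred0.
  - by rewrite /mpair_eBomega /= dot2CDl dot2CZl hlw add0r subrr.
have -> : d%:R * (b / d%:R + dot2 B l + d%:R * a / 2 * dot2 B B)
          = b + dot2 (d%:R *: B) l + a * (dot2 (d%:R *: B) (d%:R *: B) / 2).
  by rewrite !dot2Zl !dot2Zr; field.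
apply: rpredD; first by apply: rpredD => //; exact: dot2_int.
by apply: rpredM => //; exact: dot2_even.
Qed.

Lemma tNSB_preimage v :
  brauer_order omega B d -> tNSB omega B v -> tNS omega (kappaV d (eB (- B) v)).
Proof.
move=> hbo hv; have [q /= a_eq] := tNSB_divisible hbo hv.
case: v hv a_eq => a m c [[/= _ hm hc] /=]; rewrite /mpair_eBomega /= => /subr0_eq he a_eq.
split => /=.
- by rewrite a_eq mulfK // intr_int.
- split; rewrite scalerN.
  + by rewrite a_eq -scalerA; apply: intvecB => //; apply: intvecZ => //; exact: intr_int.
  + by rewrite dot2CDl dot2CNl dot2CZl he subrr.
have -> : d%:R * (c + dot2 (- B) m + a / 2 * dot2 (- B) (- B))
          = d%:R * c - dot2 (d%:R *: B) m + q%:~R * (dot2 (d%:R *: B) (d%:R *: B) / 2).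
  by rewrite !dot2Nl dot2Nr opprK !dot2Zl !dot2Zr a_eq; field.
apply: rpredD; last by apply: rpredM; [exact: intr_int | exact: dot2_even].
by apply: rpredB; [apply: rpredM; [exact: natr_int | done] | exact: dot2_int].
Qed.

Lemma tNSB_in_image v :
  brauer_order omega B d -> tNSB omega B v ->
  exists2 x, tNS omega x & eB B (kappa d x) = v.
Proof.
move=> hbo hv; exists (kappaV d (eB (- B) v)); first exact: tNSB_preimage.
by rewrite kappaVK //; have := eBNK (- B) v; rewrite opprK.
Qed.

Lemma H4_generator_in_image :
  exists2 x, tNS omega x & eB B (kappa d x) = Mk 0 0 (- d%:R^-1).
Proof.
exists (Mk 0 0 (-1)).
  by have [_ NS0 _] := tNS0 omega; split; rewrite /= ?rpredN ?rpred1.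
by apply: mukai_eq; rewrite /= ?mulr0 ?scale0r ?addr0 // dot2_0r !mul0r !addr0 mulN1r.
Qed.

End TwistedMukai.

Theorem proposition2p4 (C : numClosedFieldType) (omega : 'rV[C]_k3rank)
  (h B : 'rV[rat]_k3rank) (d : nat) :
  is_period omega -> is_ample omega h ->
  brauer_order omega B d -> intvec (d%:R *: B) ->
  lattice_isometry (tNS omega) (tNSB_ext omega B d) (fun v => eB B (kappa d v)) /\
  orientation_preserving h B (fun v => eB B (kappa d v)).
Proof.
move=> _ [_ hh_gt0 _] hbo dB_int; have [d_gt0 _ _] := hbo.
have d_neq0 : d%:R != 0 :> rat by rewrite pnatr_eq0 -lt0n.
split; last by rewrite /orientation_preserving same_orientation_eB; exact: kappa_orientation.
split.
- by move=> x; exact: twist_tNS.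
- by move=> x y _ _; rewrite kappa_add eB_add.
- by move=> x y _ _ /eB_inj/(can_inj (kappaK d_neq0)).
- apply: zspan_image => [||||||v [hv | ->]].
  + exact: tNS0.
  + exact: tNS_add.
  + exact: tNS_opp.
  + by rewrite kappa0 eB0.
  + by move=> x y; rewrite kappa_add eB_add.
  + by move=> x; rewrite kappa_opp eB_opp.
  + exact: tNSB_in_image.
  + exact: H4_generator_in_image.
- by move=> x y _ _; rewrite eB_isometry kappa_isometry.
Qed.
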